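(* Let $A\in\mathbb{R}^{n\times m}$ have distinct columns with $a_1=0$, and let $S\subset\mathbb{R}^m$ be any set of SAGE-feasible slacks for $A$, i.e. a set such that for every $c\in\mathbb{R}^m$ the signomial $f=\mathrm{Sig}(A,c)$ satisfies $$f_{\mathsf{SAGE}}=\inf\{c^\top\exp(y): y\in\mathcal{R}(A^\top)+S\}.$$ Let $T(A)=\log\,\mathrm{cl}\,\mathrm{conv}\,\exp\mathcal{R}(A^\top)$ (the moment preimage). Then $C_{\mathrm{SAGE}}(A)=C_{\mathrm{NNS}}(A)$ if and only if $S\subset T(A)$.
   Context: For $c\in\mathbb{R}^m$, $\mathrm{Sig}(A,c)$ denotes $x\mapsto\sum_{i=1}^m c_i\exp(a_i^\top x)$. $C_{\mathrm{NNS}}(A)=\{c:\mathrm{Sig}(A,c)(x)\ge 0\ \forall x\in\mathbb{R}^n\}$, $C_{\mathrm{AGE}}(A,k)=\{c\in C_{\mathrm{NNS}}(A): c_i\ge 0\ \forall i\ne k\}$, $C_{\mathrm{SAGE}}(A)=\sum_{k=1}^m C_{\mathrm{AGE}}(A,k)$. For $f=\mathrm{Sig}(A,c)$ with $a_1=0$: $f_{\mathsf{SAGE}}=\sup\{\gamma\in\mathbb{R}: c-\gamma e_1\in C_{\mathrm{SAGE}}(A)\}$. $\mathcal{R}(A^\top)$ is the range of $A^\top$ in $\mathbb{R}^m$; $\exp$ and $\log$ act entrywise (with $\log 0=-\infty$) and elementwise on sets; $\mathrm{cl}\,\mathrm{conv}$ is the closed convex hull; $+$ between sets is the Minkowski sum.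 *)

From Stdlib Require Import Reals.
Open Scope R_scope.

(* Vectors in R^k are functions nat -> R; only indices < k are meaningful.
   A matrix A in R^{n x m} is given by its columns: A i j = j-th coordinate
   of column a_{i+1}, for i < m, j < n (0-based: column a_1 is A 0). *)

Fixpoint rsum (k : nat) (f : nat -> R) : R :=
  match k with
  | O => 0
  | S k' => rsum k' f + f k'
  end.

Definition dotcol (n : nat) (A : nat -> nat -> R) (i : nat) (x : nat -> R) : R :=
  rsum n (fun j => A i j * x j).

Definition Sig (n m : nat) (A : nat -> nat -> R) (c : nat -> R) (x : nat -> R) : R :=
  rsum m (fun i => c i * exp (dotcol n A i x)).

Definition C_NNS (n m : nat) (A : nat -> nat -> R) (c : nat -> R) : Prop :=
  forall x : nat -> R, 0 <= Sig n m A c x.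

Definition C_AGE (n m : nat) (A : nat -> nat -> R) (k : nat) (c : nat -> R) : Prop :=
  C_NNS n m A c /\ (forall i, (i < m)%nat -> i <> k -> 0 <= c i).

Definition C_SAGE (n m : nat) (A : nat -> nat -> R) (c : nat -> R) : Prop :=
  exists cs : nat -> nat -> R,
    (forall k, (k < m)%nat -> C_AGE n m A k (cs k)) /\
    (forall i, (i < m)%nat -> c i = rsum m (fun k => cs k i)).

Definition shift_e1 (c : nat -> R) (g : R) : nat -> R :=
  fun i => match i with O => c i - g | S _ => c i end.

(* Extended reals, for sup / inf of possibly empty or unbounded sets. *)
Inductive ERbar : Type := Fin (r : R) | PInf | MInf.

Definition ERle (u v : ERbar) : Prop :=
  match u, v with
  | MInf, _ => True
  | _, PInf => True
  | Fin a, Fin b => a <= b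
  | _, _ => False
  end.

Definition is_sup_E (X : R -> Prop) (u : ERbar) : Prop :=
  (forall x, X x -> ERle (Fin x) u) /\
  (forall v, (forall x, X x -> ERle (Fin x) v) -> ERle u v).

Definition is_inf_E (X : R -> Prop) (u : ERbar) : Prop :=
  (forall x, X x -> ERle u (Fin x)) /\
  (forall v, (forall x, X x -> ERle v (Fin x)) -> ERle v u).

(* f_SAGE = sup { gamma : c - gamma e_1 in C_SAGE(A) } *)
Definition SAGE_set (n m : nat) (A : nat -> nat -> R) (c : nat -> R) (g : R) : Prop :=
  C_SAGE n m A (shift_e1 c g).

Definition in_range_plus (n m : nat) (A : nat -> nat -> R) (S : (nat -> R) -> Prop)
  (y : nat -> R) : Prop :=
  exists (x : nat -> R) (s : nat -> R), S s /\
    forall i, (i < m)%nat -> y i = dotcol n A i x + s i.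

Definition slack_values (n m : nat) (A : nat -> nat -> R) (S : (nat -> R) -> Prop)
  (c : nat -> R) (t : R) : Prop :=
  exists y, in_range_plus n m A S y /\ t = rsum m (fun i => c i * exp (y i)).

Definition SAGE_feasible_slacks (n m : nat) (A : nat -> nat -> R)
  (S : (nat -> R) -> Prop) : Prop :=
  forall c : nat -> R, exists u : ERbar,
    is_sup_E (SAGE_set n m A c) u /\ is_inf_E (slack_values n m A S c) u.

Definition exp_range (n m : nat) (A : nat -> nat -> R) (w : nat -> R) : Prop :=
  exists x : nat -> R, forall i, (i < m)%nat -> w i = exp (dotcol n A i x).

Definition conv (m : nat) (X : (nat -> R) -> Prop) (z : nat -> R) : Prop :=
  exists (k : nat) (lam : nat -> R) (p : nat -> nat -> R),
    (forall l, (l < k)%nat -> 0 <= lam l /\ X (p l)) /\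
    rsum k lam = 1 /\
    (forall i, (i < m)%nat -> z i = rsum k (fun l => lam l * p l i)).

Definition closure (m : nat) (X : (nat -> R) -> Prop) (z : nat -> R) : Prop :=
  forall eps, 0 < eps -> exists w, X w /\
    forall i, (i < m)%nat -> Rabs (z i - w i) < eps.

(* T(A) = log cl conv exp R(A^T), as a subset of R^m:
   y in T(A) iff exp(y) in cl conv exp R(A^T). *)
Definition T_moment (n m : nat) (A : nat -> nat -> R) (y : nat -> R) : Prop :=
  closure m (conv m (exp_range n m A)) (fun i => exp (y i)).

Definition distinct_columns (n m : nat) (A : nat -> nat -> R) : Prop :=
  forall i k, (i < m)%nat -> (k < m)%nat -> i <> k ->
    exists j, (j < n)%nat /\ A i j <> A k j.

From Stdlib Require Import Reals Lra Lia Psatz List Classical ClassicalEpsilon.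
Open Scope R_scope.

(* Write 1 for the unit vector e_1; since a_1 = 0, Sig(A, c - g 1) = Sig(A, c) - g.

   If S lies in T(A) and c is in C_NNS, then for every x the vector
   b = (c_i exp(a_i^T x))_i satisfies b^T w >= 0 for w in exp R(A^T) (this is a
   translate of the signomial), hence on cl conv exp R(A^T), in particular at
   exp(s) for s in S.  So all slack values are >= 0, f_SAGE >= 0, and c + eps 1
   is in C_SAGE for every eps > 0.  AGE decompositions can be normalised to have
   entries bounded by |c_i|, so by compactness a limit of decompositions of
   c + eps 1 decomposes c.

   Conversely, if exp(s) is outside cl conv exp R(A^T) for some s in S, a
   hyperplane c^T w = mu separates them: c^T exp(A^T x) >= mu for all x, so
   c - mu 1 is in C_NNS, while the slack value c^T exp(s) < mu gives
   f_SAGE < mu, so c - mu 1 is not in C_SAGE. *)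

Lemma rsum_ext k f g : (forall i, (i < k)%nat -> f i = g i) -> rsum k f = rsum k g.
Proof.
  induction k as [|k IH]; simpl; intros H; auto.
  rewrite IH, H by (auto; lia). reflexivity.
Qed.

Lemma rsum_plus k f g : rsum k (fun i => f i + g i) = rsum k f + rsum k g.
Proof. induction k as [|k IH]; simpl; [lra|]. rewrite IH. lra. Qed.

Lemma rsum_minus k f g : rsum k (fun i => f i - g i) = rsum k f - rsum k g.
Proof. induction k as [|k IH]; simpl; [lra|]. rewrite IH. lra. Qed.

Lemma rsum_mult_l k a f : rsum k (fun i => a * f i) = a * rsum k f.
Proof. induction k as [|k IH]; simpl; [lra|]. rewrite IH. lra. Qed.

Lemma rsum_mult_r k a f : rsum k (fun i => f i * a) = rsum k f * a.
Proof. induction k as [|k IH]; simpl; [lra|]. rewrite IH. lra. Qed.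

Lemma rsum_zero k : rsum k (fun _ => 0) = 0.
Proof. induction k as [|k IH]; simpl; [lra|]. rewrite IH. lra. Qed.

Lemma rsum_le k f g : (forall i, (i < k)%nat -> f i <= g i) -> rsum k f <= rsum k g.
Proof.
  induction k as [|k IH]; simpl; intros H; [lra|].
  apply Rplus_le_compat; [apply IH; intros; apply H|apply H]; lia.
Qed.

Lemma rsum_nonneg k f : (forall i, (i < k)%nat -> 0 <= f i) -> 0 <= rsum k f.
Proof. intros H. rewrite <- (rsum_zero k). apply rsum_le, H. Qed.

Lemma rsum_term_le k f i :
  (forall j, (j < k)%nat -> 0 <= f j) -> (i < k)%nat -> f i <= rsum k f.
Proof.
  induction k as [|k IH]; simpl; intros H Hi; [lia|].
  assert (0 <= f k) by (apply H; lia).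
  destruct (Nat.eq_dec i k) as [->|Hne].
  - pose proof (rsum_nonneg k f ltac:(intros; apply H; lia)). lra.
  - pose proof (IH ltac:(intros; apply H; lia) ltac:(lia)). lra.
Qed.

Lemma rsum_update k i a f : (i < k)%nat ->
  rsum k (fun j => if Nat.eqb j i then a else f j) = rsum k f - f i + a.
Proof.
  induction k as [|k IH]; simpl; intros Hi; [lia|].
  destruct (Nat.eq_dec i k) as [->|Hne].
  - rewrite Nat.eqb_refl, (rsum_ext k _ f); [lra|].
    intros j Hj. destruct (Nat.eqb_spec j k); [lia|auto].
  - rewrite IH by lia. destruct (Nat.eqb_spec k i); [lia|]. lra.
Qed.

Lemma rsum_comm a b (f : nat -> nat -> R) :
  rsum a (fun i => rsum b (fun j => f i j)) = rsum b (fun j => rsum a (fun i => f i j)).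
Proof.
  induction a as [|a IH]; simpl.
  - now rewrite rsum_zero.
  - now rewrite IH, <- rsum_plus.
Qed.

Lemma rsum_split a b f : rsum (a + b) f = rsum a f + rsum b (fun l => f (a + l)%nat).
Proof.
  induction b as [|b IH]; simpl.
  - rewrite Nat.add_0_r. lra.
  - rewrite Nat.add_succ_r. simpl. rewrite IH. lra.
Qed.

Lemma Un_cv_rsum k (f : nat -> nat -> R) g :
  (forall i, (i < k)%nat -> Un_cv (fun j => f j i) (g i)) ->
  Un_cv (fun j => rsum k (f j)) (rsum k g).
Proof.
  induction k as [|k IH]; simpl; intros H.
  - intros e He. exists 0%nat. intros. unfold Rdist. rewrite Rminus_0_r, Rabs_R0. lra.
  - apply CV_plus; [apply IH; intros|]; apply H; lia.
Qed.

Lemma Un_cv_const c : Un_cv (fun _ => c) c.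
Proof. intros e He. exists 0%nat. intros. unfold Rdist. rewrite Rminus_diag, Rabs_R0. lra. Qed.

Lemma Un_cv_lower_bound u l d : Un_cv u l -> (forall k, d <= u k) -> d <= l.
Proof. intros Hu H. exact (Rle_cv_lim H (Un_cv_const d) Hu). Qed.

Lemma Rdiv_nonneg a b : 0 <= a -> 0 < b -> 0 <= a / b.
Proof. intros Ha Hb. apply Rmult_le_pos; [exact Ha|left; apply Rinv_0_lt_compat, Hb]. Qed.

Definition inv_succ (k : nat) : R := / (INR k + 1).

Lemma inv_succ_pos k : 0 < inv_succ k.
Proof. apply Rinv_0_lt_compat. pose proof (pos_INR k). lra. Qed.

Lemma inv_succ_le_1 k : inv_succ k <= 1.
Proof. unfold inv_succ. rewrite <- Rinv_1. apply Rinv_le_contravar; pose proof (pos_INR k); lra. Qed.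

Lemma inv_succ_antitone k l : (k <= l)%nat -> inv_succ l <= inv_succ k.
Proof.
  intros H. apply Rinv_le_contravar; [pose proof (pos_INR k); lra|].
  apply Rplus_le_compat_r, le_INR, H.
Qed.

Lemma inv_succ_lt e : 0 < e -> exists N, inv_succ N < e.
Proof.
  intros He. destruct (archimed_cor1 e He) as [N [HN HN0]]. exists N.
  apply lt_0_INR in HN0. apply (Rlt_trans _ (/ INR N)); auto.
  apply Rinv_lt_contravar; nra.
Qed.

Lemma Un_cv_inv_succ : Un_cv inv_succ 0.
Proof.
  intros e He. destruct (inv_succ_lt e He) as [N HN]. exists N. intros k Hk.
  unfold Rdist. rewrite Rminus_0_r, Rabs_right by (apply Rle_ge; left; apply inv_succ_pos).
  pose proof (inv_succ_antitone N k Hk). lra.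
Qed.

Lemma Un_cv_upper_bound_inv_succ u l d :
  Un_cv u l -> (forall k, u k < d + inv_succ k) -> l <= d.
Proof.
  intros Hu H.
  pose proof (CV_plus _ _ _ _ (Un_cv_const d) Un_cv_inv_succ) as Hd.
  rewrite Rplus_0_r in Hd.
  exact (Rle_cv_lim (fun k => Rlt_le _ _ (H k)) Hu Hd).
Qed.

Definition strictly_increasing (phi : nat -> nat) : Prop :=
  forall k, (phi k < phi (S k))%nat.

Lemma strictly_increasing_lt phi : strictly_increasing phi ->
  forall i j, (i < j)%nat -> (phi i < phi j)%nat.
Proof.
  intros H i j. induction j as [|j IH]; intros Hij; [lia|].
  specialize (H j). destruct (Nat.eq_dec i j) as [->|Hne]; [lia|].
  specialize (IH ltac:(lia)). lia.
Qed.

Lemma strictly_increasing_ge phi : strictly_increasing phi -> forall k, (k <= phi k)%nat.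
Proof. intros H k. induction k as [|k IH]; [lia|]. specialize (H k). lia. Qed.

Lemma strictly_increasing_comp phi psi : strictly_increasing phi -> strictly_increasing psi ->
  strictly_increasing (fun k => phi (psi k)).
Proof. intros Hphi Hpsi k. apply strictly_increasing_lt, Hpsi. exact Hphi. Qed.

Lemma Un_cv_subseq u l phi : strictly_increasing phi ->
  Un_cv u l -> Un_cv (fun k => u (phi k)) l.
Proof.
  intros Hphi Hu e He. destruct (Hu e He) as [N HN]. exists N. intros k Hk.
  apply HN. pose proof (strictly_increasing_ge phi Hphi k). lia.
Qed.

Fixpoint extraction (pick : nat -> nat -> nat) (k : nat) : nat :=
  match k with
  | O => pick O O
  | S k' => pick (S (extraction pick k')) k
  end.

Lemma bolzano_weierstrass_seq (a : nat -> R) B : (forall k, Rabs (a k) <= B) ->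
  exists phi l, strictly_increasing phi /\ Un_cv (fun k => a (phi k)) l.
Proof.
  intros HB.
  destruct (Bolzano_Weierstrass a (fun x => -B <= x <= B) (compact_P3 (-B) B)) as [l Hl].
  { intros k. specialize (HB k). unfold Rabs in HB. destruct (Rcase_abs (a k)); lra. }
  assert (Hpick : forall Nk : nat * nat,
    exists p, (fst Nk <= p)%nat /\ Rabs (a p - l) < inv_succ (snd Nk)).
  { intros [N k]. apply (Hl (fun y => Rabs (y - l) < inv_succ k) N).
    exists (mkposreal _ (inv_succ_pos k)). intros y Hy. exact Hy. }
  destruct (choice _ Hpick) as [pick Hp].
  set (phi := extraction (fun N k => pick (N, k))).
  exists phi, l. split.
  - intros k. exact (proj1 (Hp (S (phi k), S k))).
  - intros e He. destruct (inv_succ_lt e He) as [N HN]. exists N. intros k Hk.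
    assert (Rabs (a (phi k) - l) < inv_succ k) by (destruct k; apply (Hp (_, _))).
    pose proof (inv_succ_antitone N k Hk). unfold Rdist. lra.
Qed.

Lemma bolzano_weierstrass_finite {I : Type} (L : list I) (u : nat -> I -> R) B :
  (forall k q, In q L -> Rabs (u k q) <= B) ->
  exists phi l, strictly_increasing phi /\
    forall q, In q L -> Un_cv (fun k => u (phi k) q) (l q).
Proof.
  induction L as [|q0 L IH]; intros HB.
  - exists (fun k => k), (fun _ => 0). split; [intros k; lia|]. intros q [].
  - destruct IH as [phi [l [Hphi Hl]]]; [intros k q Hq; apply HB; now right|].
    destruct (bolzano_weierstrass_seq (fun k => u (phi k) q0) B) as [psi [l0 [Hpsi Hl0]]].
    { intros k. apply HB. now left. }
    exists (fun k => phi (psi k)),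
      (fun q => if excluded_middle_informative (q = q0) then l0 else l q).
    split; [now apply strictly_increasing_comp|].
    intros q Hq. destruct (excluded_middle_informative (q = q0)) as [->|Hne]; [exact Hl0|].
    destruct Hq as [->|Hq]; [congruence|].
    apply (Un_cv_subseq (fun k => u (phi k) q)); auto.
Qed.

Lemma bolzano_weierstrass_matrix m (u : nat -> nat -> nat -> R) B :
  (forall k a b, (a < m)%nat -> (b < m)%nat -> Rabs (u k a b) <= B) ->
  exists phi l, strictly_increasing phi /\
    forall a b, (a < m)%nat -> (b < m)%nat -> Un_cv (fun k => u (phi k) a b) (l a b).
Proof.
  intros HB.
  destruct (bolzano_weierstrass_finite (list_prod (seq 0 m) (seq 0 m))
    (fun k q => u k (fst q) (snd q)) B) as [phi [l [Hphi Hl]]].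
  { intros k [a b] Hq. apply in_prod_iff in Hq as [Ha Hb].
    apply in_seq in Ha, Hb. apply HB; simpl; lia. }
  exists phi, (fun a b => l (a, b)). split; auto.
  intros a b Ha Hb. apply (Hl (a, b)). apply in_prod; apply in_seq; lia.
Qed.

Section Signomials.
Variables (n m : nat) (A : nat -> nat -> R).

Lemma dotcol_plus i x y :
  dotcol n A i (fun j => x j + y j) = dotcol n A i x + dotcol n A i y.
Proof. unfold dotcol. rewrite <- rsum_plus. apply rsum_ext. intros; ring. Qed.

Lemma dotcol_zero i : dotcol n A i (fun _ => 0) = 0.
Proof.
  unfold dotcol. transitivity (rsum n (fun _ => 0)); [|apply rsum_zero].
  apply rsum_ext. intros; ring.
Qed.

Lemma dotcol_zero_column i x : (forall j, (j < n)%nat -> A i j = 0) -> dotcol n A i x = 0.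
Proof.
  intros H. unfold dotcol. rewrite <- (rsum_zero n). apply rsum_ext.
  intros j Hj. rewrite H by auto. ring.
Qed.

Lemma Sig_lin a t b x :
  Sig n m A (fun i => a i + t * b i) x = Sig n m A a x + t * Sig n m A b x.
Proof. unfold Sig. rewrite <- rsum_mult_l, <- rsum_plus. apply rsum_ext. intros; ring. Qed.

Lemma Sig_shift_e1 c g x : (0 < m)%nat -> (forall j, (j < n)%nat -> A 0%nat j = 0) ->
  Sig n m A (shift_e1 c g) x = Sig n m A c x - g.
Proof.
  intros Hm Ha1. unfold Sig.
  rewrite (rsum_ext m _ (fun i => if Nat.eqb i 0 then (c 0%nat - g) * exp (dotcol n A 0 x)
                                  else c i * exp (dotcol n A i x))).
  - rewrite rsum_update, dotcol_zero_column, exp_0 by auto. ring.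
  - intros [|i] Hi; reflexivity.
Qed.

Lemma NNS_of_nonneg d : (forall i, (i < m)%nat -> 0 <= d i) -> C_NNS n m A d.
Proof.
  intros H x. apply rsum_nonneg. intros i Hi.
  apply Rmult_le_pos; [auto|left; apply exp_pos].
Qed.

Lemma NNS_lin a t b : C_NNS n m A a -> C_NNS n m A b -> 0 <= t ->
  C_NNS n m A (fun i => a i + t * b i).
Proof. intros Ha Hb Ht x. rewrite Sig_lin. pose proof (Ha x). pose proof (Hb x). nra. Qed.

Lemma C_SAGE_NNS c : C_SAGE n m A c -> C_NNS n m A c.
Proof.
  intros [cs [Hcs Hsum]] x. unfold Sig.
  rewrite (rsum_ext m _ (fun i => rsum m (fun k => cs k i * exp (dotcol n A i x)))).
  - rewrite rsum_comm. apply rsum_nonneg. intros k Hk. apply (proj1 (Hcs k Hk)).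
  - intros i Hi. now rewrite Hsum, <- rsum_mult_r.
Qed.

Lemma C_SAGE_ext c c' : (forall i, (i < m)%nat -> c i = c' i) ->
  C_SAGE n m A c -> C_SAGE n m A c'.
Proof. intros H [cs [Hcs Hsum]]. exists cs. split; auto. intros i Hi. rewrite <- H; auto. Qed.

Lemma C_SAGE_add_nonneg c d : (0 < m)%nat -> C_SAGE n m A c ->
  (forall i, (i < m)%nat -> 0 <= d i) -> C_SAGE n m A (fun i => c i + d i).
Proof.
  intros Hm [cs [Hcs Hsum]] Hd.
  exists (fun k => if Nat.eqb k 0 then (fun i => cs 0%nat i + 1 * d i) else cs k). split.
  - intros k Hk. destruct (Nat.eqb_spec k 0) as [->|Hne]; auto.
    destruct (Hcs 0%nat Hm) as [HN Hpos]. split.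
    + apply NNS_lin; [auto|apply NNS_of_nonneg|]; auto; lra.
    + intros i Hi Hi0. pose proof (Hpos i Hi Hi0). pose proof (Hd i Hi). lra.
  - intros i Hi.
    rewrite (rsum_ext m _ (fun k => if Nat.eqb k 0 then cs 0%nat i + 1 * d i else cs k i)).
    + rewrite rsum_update, <- Hsum by auto. ring.
    + intros k Hk. now destruct (Nat.eqb k 0).
Qed.

Lemma SAGE_set_down c g g' : (0 < m)%nat ->
  SAGE_set n m A c g -> g' <= g -> SAGE_set n m A c g'.
Proof.
  intros Hm H Hle.
  apply (C_SAGE_ext (fun i => shift_e1 c g i + match i with O => g - g' | _ => 0 end)).
  - intros [|i] Hi; simpl; ring.
  - apply C_SAGE_add_nonneg; auto. intros [|i] Hi; lra.
Qed.

Lemma NNS_dot_exp_range c x w : C_NNS n m A c -> exp_range n m A w ->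
  0 <= rsum m (fun i => c i * exp (dotcol n A i x) * w i).
Proof.
  intros Hc [x' Hx'].
  rewrite (rsum_ext m _ (fun i => c i * exp (dotcol n A i (fun j => x j + x' j)))).
  - apply Hc.
  - intros i Hi. rewrite Hx', dotcol_plus, exp_plus by auto. ring.
Qed.

Lemma exp_range_one : exp_range n m A (fun _ => 1).
Proof. exists (fun _ => 0). intros i Hi. now rewrite dotcol_zero, exp_0. Qed.

End Signomials.

Section Normalisation.
Variables (n m : nat) (A : nat -> nat -> R).

Definition AGE_decomposition (c : nat -> R) (cs : nat -> nat -> R) : Prop :=
  (forall k, (k < m)%nat -> C_AGE n m A k (cs k)) /\
  (forall i, (i < m)%nat -> c i = rsum m (fun k => cs k i)).

Definition normal_at (c : nat -> R) (cs : nat -> nat -> R) (i : nat) : Prop :=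
  (0 <= c i -> 0 <= cs i i) /\
  (c i < 0 -> forall k, (k < m)%nat -> k <> i -> cs k i = 0).

Definition transfer (cs : nat -> nat -> R) (i : nat) (t : nat -> R) : nat -> nat -> R :=
  fun k j => cs k j + t k * cs i j.

Lemma AGE_decomposition_diag_le c cs i : AGE_decomposition c cs -> (i < m)%nat ->
  cs i i <= c i.
Proof.
  intros [Hage Hsum] Hi.
  assert (H : 0 <= rsum m (fun k => if Nat.eqb k i then 0 else cs k i)).
  { apply rsum_nonneg. intros k Hk. destruct (Nat.eqb_spec k i); [lra|].
    apply (proj2 (Hage k Hk)); auto. }
  rewrite (rsum_update m i 0 (fun k => cs k i)), <- Hsum in H by auto. lra.
Qed.

Lemma AGE_transfer k i d e t : k <> i -> C_AGE n m A k d -> C_AGE n m A i e ->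
  0 <= t -> 0 <= d i + t * e i -> C_AGE n m A k (fun j => d j + t * e j).
Proof.
  intros Hki [Hd Hdpos] [He Hepos] Ht Hi. split; [now apply NNS_lin|].
  intros j Hj Hjk. destruct (Nat.eq_dec j i) as [->|Hji]; auto.
  pose proof (Hdpos j Hj Hjk). pose proof (Hepos j Hj Hji). nra.
Qed.

Lemma AGE_rescale k e t : -1 <= t -> C_AGE n m A k e ->
  C_AGE n m A k (fun j => e j + t * e j).
Proof.
  intros Ht [He Hpos]. split.
  - intros x. rewrite Sig_lin. pose proof (He x). nra.
  - intros j Hj Hjk. pose proof (Hpos j Hj Hjk). nra.
Qed.

Lemma transfer_decomposition c cs i t : AGE_decomposition c cs -> (i < m)%nat ->
  rsum m t = 0 -> -1 <= t i ->
  (forall k, (k < m)%nat -> k <> i -> 0 <= t k /\ 0 <= cs k i + t k * cs i i) ->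
  AGE_decomposition c (transfer cs i t).
Proof.
  intros [Hage Hsum] Hi Ht0 Hti Htk. split.
  - intros k Hk. unfold transfer. destruct (Nat.eq_dec k i) as [->|Hne].
    + apply AGE_rescale; auto.
    + destruct (Htk k Hk Hne). apply (AGE_transfer k i); auto.
  - intros j Hj. unfold transfer. rewrite rsum_plus, rsum_mult_r, Ht0, <- Hsum by auto. ring.
Qed.

Lemma transfer_normal_at c cs i t i' : AGE_decomposition c cs ->
  (i < m)%nat -> (i' < m)%nat -> i' <> i -> 0 <= t i' ->
  normal_at c cs i' -> normal_at c (transfer cs i t) i'.
Proof.
  intros [Hage _] Hi Hi' Hne Ht [Hnn Hzero]. unfold transfer. split.
  - intros Hc. pose proof (Hnn Hc). pose proof (proj2 (Hage i Hi) i' Hi' Hne). nra.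
  - intros Hc k Hk Hki. rewrite (Hzero Hc k Hk Hki), (Hzero Hc i Hi (not_eq_sym Hne)). ring.
Qed.

Lemma normalize_at c cs i : AGE_decomposition c cs -> (i < m)%nat ->
  exists cs', AGE_decomposition c cs' /\ normal_at c cs' i /\
    forall i', (i' < m)%nat -> i' <> i -> normal_at c cs i' -> normal_at c cs' i'.
Proof.
  intros Hdec Hi. pose proof (AGE_decomposition_diag_le c cs i Hdec Hi) as Hgc.
  set (g := cs i i) in *.
  destruct (Rle_or_lt 0 g) as [Hg|Hg].
  { exists cs. split; [auto|split; [split; [auto|intros; lra]|auto]]. }
  (* Spread [cs i] over the other AGE vectors in proportion to their i-th
     entries, which sum to b = c_i - g >= 0.  Normalising by M = max(b, -g)
     zeroes the i-th entry of [cs i] when c_i >= 0, and all the other i-th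
     entries when c_i < 0. *)
  set (b := c i - g). set (M := Rmax b (- g)).
  assert (HbM : b <= M) by apply Rmax_l.
  assert (HgM : - g <= M) by apply Rmax_r.
  set (t := fun k => if Nat.eqb k i then - b / M else cs k i / M).
  assert (Hti : t i = - b / M) by (unfold t; now rewrite Nat.eqb_refl).
  assert (Htk : forall k, k <> i -> t k = cs k i / M).
  { intros k Hk. unfold t. now rewrite (proj2 (Nat.eqb_neq k i) Hk). }
  assert (Hoff : forall k, (k < m)%nat -> k <> i -> 0 <= cs k i).
  { intros k Hk Hki. apply (proj2 (proj1 Hdec k Hk)); auto. }
  exists (transfer cs i t). split; [|split].
  - apply transfer_decomposition; auto.
    + unfold t. rewrite (rsum_update m i (- b / M) (fun k => cs k i / M)) by auto.
      unfold Rdiv. rewrite rsum_mult_r, <- (proj2 Hdec i Hi). unfold b, g. ring.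
    + rewrite Hti. replace (- b / M) with (-1 + (M - b) / M) by (field; lra).
      assert (0 <= (M - b) / M) by (apply Rdiv_nonneg; lra). lra.
    + intros k Hk Hki. rewrite Htk by auto. fold g. split.
      * apply Rdiv_nonneg; [apply Hoff|]; auto; lra.
      * replace (cs k i + cs k i / M * g) with (cs k i * ((M + g) / M)) by (field; lra).
        apply Rmult_le_pos; [apply Hoff; auto|apply Rdiv_nonneg; lra].
  - unfold transfer. split.
    + intros Hc. rewrite Hti. fold g.
      assert (HM : M = b) by (apply Rmax_left; unfold b; lra).
      rewrite HM. replace (g + - b / b * g) with 0 by (field; unfold b; lra). lra.
    + intros Hc k Hk Hki. rewrite Htk by auto. fold g.
      assert (HM : M = - g) by (apply Rmax_right; unfold b; lra).
      rewrite HM. field. lra.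
  - intros i' Hi' Hne Hn. apply transfer_normal_at; auto.
    rewrite Htk by auto. apply Rdiv_nonneg; [apply Hoff|]; auto; lra.
Qed.

Lemma normalize c cs : AGE_decomposition c cs ->
  exists cs', AGE_decomposition c cs' /\ forall i, (i < m)%nat -> normal_at c cs' i.
Proof.
  intros Hdec.
  enough (H : forall j, (j <= m)%nat -> exists cs',
    AGE_decomposition c cs' /\ forall i, (i < j)%nat -> normal_at c cs' i)
    by exact (H m (le_n m)).
  induction j as [|j IH]; intros Hj.
  - exists cs. split; auto. intros; lia.
  - destruct IH as [cs1 [Hdec1 Hn1]]; [lia|].
    destruct (normalize_at c cs1 j Hdec1) as [cs2 [Hdec2 [Hn2 Hkeep]]]; [lia|].
    exists cs2. split; auto. intros i Hi.
    destruct (Nat.eq_dec i j) as [->|Hne]; auto.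
    apply Hkeep, Hn1; lia.
Qed.

Lemma bounded_AGE_decomposition c : C_SAGE n m A c ->
  exists cs, AGE_decomposition c cs /\
    forall k i, (k < m)%nat -> (i < m)%nat -> Rabs (cs k i) <= Rabs (c i).
Proof.
  intros [cs0 Hdec0].
  destruct (normalize c cs0 Hdec0) as [cs [[Hage Hsum] Hn]].
  exists cs. split; [split; auto|].
  intros k i Hk Hi. destruct (Hn i Hi) as [Hnn Hzero].
  destruct (Rle_or_lt 0 (c i)) as [Hc|Hc].
  - assert (Hcol : forall k, (k < m)%nat -> 0 <= cs k i).
    { intros k' Hk'. destruct (Nat.eq_dec k' i) as [->|Hne]; auto.
      apply (proj2 (Hage k' Hk')); auto. }
    rewrite !Rabs_right by (apply Rle_ge; auto).
    rewrite Hsum by auto. apply (rsum_term_le m (fun k => cs k i)); auto.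
  - destruct (Nat.eq_dec k i) as [->|Hne].
    + rewrite (Hsum i Hi), (rsum_ext m _ (fun k => if Nat.eqb k i then cs i i else 0)).
      * rewrite rsum_update, rsum_zero by auto. right. f_equal. ring.
      * intros k' Hk'. destruct (Nat.eqb_spec k' i) as [->|Hne]; auto.
    + rewrite (Hzero Hc k Hk Hne), Rabs_R0. apply Rabs_pos.
Qed.

End Normalisation.

Section Closedness.
Variables (n m : nat) (A : nat -> nat -> R).

Lemma AGE_limit k (d : nat -> nat -> R) l :
  (forall i, (i < m)%nat -> Un_cv (fun j => d j i) (l i)) ->
  (forall j, C_AGE n m A k (d j)) -> C_AGE n m A k l.
Proof.
  intros Hcv Hd. split.
  - intros x. apply (Un_cv_lower_bound (fun j => Sig n m A (d j) x)); [|intros j; apply Hd].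
    apply (Un_cv_rsum m (fun j i => d j i * exp (dotcol n A i x))).
    intros i Hi. apply CV_mult; [auto|apply Un_cv_const].
  - intros i Hi Hik. apply (Un_cv_lower_bound (fun j => d j i)); auto.
    intros j. apply (proj2 (Hd j)); auto.
Qed.

Lemma Un_cv_shift_e1 c i : Un_cv (fun k => shift_e1 c (- inv_succ k) i) (c i).
Proof.
  destruct i as [|i]; simpl; [|apply Un_cv_const].
  pose proof (CV_minus _ _ _ _ (Un_cv_const (c 0%nat)) (CV_opp _ _ Un_cv_inv_succ)) as H.
  rewrite Ropp_0, Rminus_0_r in H. exact H.
Qed.

Lemma Rabs_shift_e1_le c g i : Rabs (shift_e1 c g i) <= Rabs (c i) + Rabs g.
Proof.
  destruct i as [|i]; simpl.
  - rewrite <- (Rabs_Ropp g). apply Rabs_triang.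
  - pose proof (Rabs_pos g). lra.
Qed.

Lemma C_SAGE_of_shifts c :
  (forall e, 0 < e -> SAGE_set n m A c (- e)) -> C_SAGE n m A c.
Proof.
  intros H.
  set (cn := fun k => shift_e1 c (- inv_succ k)).
  assert (Hex : forall k, exists cs, AGE_decomposition n m A (cn k) cs /\
     forall a i, (a < m)%nat -> (i < m)%nat -> Rabs (cs a i) <= Rabs (cn k i)).
  { intros k. apply bounded_AGE_decomposition, H, inv_succ_pos. }
  destruct (choice _ Hex) as [D HD].
  set (B := rsum m (fun i => Rabs (c i)) + 1).
  assert (HB : forall k i, (i < m)%nat -> Rabs (cn k i) <= B).
  { intros k i Hi. unfold cn, B.
    pose proof (Rabs_shift_e1_le c (- inv_succ k) i) as Hs.
    rewrite Rabs_Ropp, (Rabs_right (inv_succ k)) in Hs by (apply Rle_ge; left; apply inv_succ_pos).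
    pose proof (rsum_term_le m (fun j => Rabs (c j)) i (fun j _ => Rabs_pos (c j)) Hi).
    pose proof (inv_succ_le_1 k). lra. }
  destruct (bolzano_weierstrass_matrix m D B) as [phi [l [Hphi Hl]]].
  { intros k a i Ha Hi. eapply Rle_trans; [apply (proj2 (HD k))|apply HB]; auto. }
  exists l. split.
  - intros a Ha. apply (AGE_limit a (fun k => D (phi k) a)).
    + intros i Hi. apply Hl; auto.
    + intros k. apply (proj1 (proj1 (HD (phi k)))); auto.
  - intros i Hi. apply (UL_sequence (fun k => cn (phi k) i)).
    + apply (Un_cv_subseq (fun k => cn k i)), Un_cv_shift_e1; auto.
    + apply (Un_cv_ext (fun k => rsum m (fun a => D (phi k) a i))).
      * intros k. symmetry. apply (proj2 (proj1 (HD (phi k)))); auto.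
      * apply (Un_cv_rsum m (fun k a => D (phi k) a i)). intros a Ha. apply Hl; auto.
Qed.

End Closedness.

Lemma inf_approx (X : R -> Prop) b : (exists x, X x) -> (forall x, X x -> b <= x) ->
  exists d, (forall x, X x -> d <= x) /\
    forall delta, 0 < delta -> exists x, X x /\ x < d + delta.
Proof.
  intros [x0 Hx0] Hb.
  destruct (completeness (fun r => X (- r))) as [s [Hub Hlub]].
  - exists (- b). intros r Hr. specialize (Hb _ Hr). lra.
  - exists (- x0). now rewrite Ropp_involutive.
  - exists (- s). split.
    + intros x Hx. enough (- x <= s) by lra. apply Hub. now rewrite Ropp_involutive.
    + intros delta Hdelta. apply NNPP. intros Hno.
      enough (s <= s - delta) by lra. apply Hlub. intros r Hr.
      apply Rnot_lt_le. intros Hlt. apply Hno. exists (- r). split; [exact Hr|lra].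
Qed.

Lemma nonpos_of_quadratic_bound X Y : 0 <= Y ->
  (forall t, 0 < t <= 1 -> 2 * t * X <= t * t * Y) -> X <= 0.
Proof.
  intros HY H. apply Rnot_lt_le. intros HX.
  (* t = X / (X + Y) makes 2 t X - t^2 Y = t X > 0 *)
  set (t := X / (X + Y)).
  assert (Htx : t * (X + Y) = X) by (unfold t; field; lra).
  assert (Ht0 : 0 < t) by (apply Rdiv_lt_0_compat; lra).
  specialize (H t ltac:(split; nra)). nra.
Qed.

Definition dist2 (m : nat) (z w : nat -> R) : R :=
  rsum m (fun i => (z i - w i) * (z i - w i)).

Lemma dist2_nonneg m z w : 0 <= dist2 m z w.
Proof. apply rsum_nonneg. intros i _. apply Rle_0_sqr. Qed.

Lemma dist2_coord_le m z w i : (i < m)%nat -> (z i - w i) * (z i - w i) <= dist2 m z w.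
Proof.
  intros Hi. apply (rsum_term_le m (fun j => (z j - w j) * (z j - w j))); auto.
  intros j _. apply Rle_0_sqr.
Qed.

Lemma dist2_parallelogram m z w v : dist2 m w v =
  2 * dist2 m z w + 2 * dist2 m z v - 4 * dist2 m z (fun i => w i + / 2 * (v i - w i)).
Proof.
  unfold dist2. rewrite <- !rsum_mult_l, <- rsum_plus, <- rsum_minus.
  apply rsum_ext. intros; field.
Qed.

Lemma dist2_segment m z p v t : dist2 m z (fun i => p i + t * (v i - p i)) =
  dist2 m z p - 2 * t * rsum m (fun i => (z i - p i) * (v i - p i)) + t * t * dist2 m v p.
Proof.
  unfold dist2. rewrite <- !rsum_mult_l, <- rsum_minus, <- rsum_plus.
  apply rsum_ext. intros; ring.
Qed.

Lemma Un_cv_dist2 m z (W : nat -> nat -> R) p :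
  (forall i, (i < m)%nat -> Un_cv (fun k => W k i) (p i)) ->
  Un_cv (fun k => dist2 m z (W k)) (dist2 m z p).
Proof.
  intros H. apply (Un_cv_rsum m (fun k i => (z i - W k i) * (z i - W k i))).
  intros i Hi. pose proof (CV_minus _ _ _ _ (Un_cv_const (z i)) (H i Hi)) as Hd.
  exact (CV_mult _ _ _ _ Hd Hd).
Qed.

Section Separation.
Variables (m : nat) (C : (nat -> R) -> Prop).
Hypothesis C_convex : forall w v t, C w -> C v -> 0 <= t <= 1 ->
  C (fun i => w i + t * (v i - w i)).

Lemma dist2_lower_bound_of_not_closure z : ~ closure m C z ->
  exists e, 0 < e /\ forall w, C w -> e <= dist2 m z w.
Proof.
  intros Hz. apply not_all_ex_not in Hz as [e He]. apply imply_to_and in He as [He Hno].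
  exists (e * e). split; [nra|]. intros w Hw.
  destruct (classic (exists i, (i < m)%nat /\ e <= Rabs (z i - w i))) as [[i [Hi Hei]]|Hall].
  - eapply Rle_trans; [|apply (dist2_coord_le m z w i Hi)].
    unfold Rabs in Hei. destruct (Rcase_abs (z i - w i)); nra.
  - exfalso. apply Hno. exists w. split; [exact Hw|].
    intros i Hi. apply Rnot_le_lt. intros Hle. apply Hall. eauto.
Qed.

Lemma minimizing_Cauchy z d (W : nat -> nat -> R) :
  (forall w, C w -> d <= dist2 m z w) ->
  (forall k, C (W k) /\ dist2 m z (W k) < d + inv_succ k) ->
  forall i, (i < m)%nat -> Cauchy_crit (fun k => W k i).
Proof.
  intros Hd HW.
  assert (Hpar : forall k l, dist2 m (W k) (W l) < 2 * inv_succ k + 2 * inv_succ l).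
  { intros k l. rewrite (dist2_parallelogram m z).
    pose proof (Hd _ (C_convex (W k) (W l) (/ 2) (proj1 (HW k)) (proj1 (HW l)) ltac:(lra))).
    pose proof (proj2 (HW k)). pose proof (proj2 (HW l)). lra. }
  intros i Hi e He.
  destruct (inv_succ_lt (e * e / 4)) as [N HN]; [apply Rdiv_lt_0_compat; nra|].
  exists N. intros k l Hk Hl. unfold Rdist.
  pose proof (inv_succ_antitone N k Hk). pose proof (inv_succ_antitone N l Hl).
  pose proof (dist2_coord_le m (W k) (W l) i Hi). pose proof (Hpar k l).
  unfold Rabs. destruct (Rcase_abs (W k i - W l i)); nra.
Qed.

Lemma nearest_point z : (exists w, C w) ->
  exists p, (forall b, (forall w, C w -> b <= dist2 m z w) -> b <= dist2 m z p) /\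
    forall v t, C v -> 0 <= t <= 1 ->
      dist2 m z p <= dist2 m z (fun i => p i + t * (v i - p i)).
Proof.
  intros [w0 Hw0].
  destruct (inf_approx (fun r => exists w, C w /\ r = dist2 m z w) 0) as [d [Hd Happrox]].
  { exists (dist2 m z w0), w0. auto. }
  { intros r [w [_ ->]]. apply dist2_nonneg. }
  assert (Hdw : forall w, C w -> d <= dist2 m z w) by (intros w Hw; apply Hd; eauto).
  assert (HW : forall k, exists w, C w /\ dist2 m z w < d + inv_succ k).
  { intros k. destruct (Happrox _ (inv_succ_pos k)) as [r [[w [Hw ->]] Hr]]. eauto. }
  destruct (choice _ HW) as [W HWk].
  assert (Hp : forall i, exists pi, (i < m)%nat -> Un_cv (fun k => W k i) pi).
  { intros i. destruct (Nat.lt_ge_cases i m) as [Hi|Hi].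
    - destruct (R_complete _ (minimizing_Cauchy z d W Hdw HWk i Hi)) as [pi Hpi]. eauto.
    - exists 0. intros; lia. }
  destruct (choice _ Hp) as [p Hpcv].
  assert (Hdp : dist2 m z p <= d).
  { apply (Un_cv_upper_bound_inv_succ (fun k => dist2 m z (W k))); [apply Un_cv_dist2; auto|].
    intros k. apply HWk. }
  exists p. split.
  - intros b Hb. apply (Un_cv_lower_bound (fun k => dist2 m z (W k))); [apply Un_cv_dist2; auto|].
    intros k. apply Hb, HWk.
  - intros v t Hv Ht. apply (Rle_trans _ d _ Hdp).
    apply (Un_cv_lower_bound (fun k => dist2 m z (fun i => W k i + t * (v i - W k i)))).
    + apply Un_cv_dist2. intros i Hi. apply CV_plus; [auto|].
      apply (CV_mult (fun _ => t)); [apply Un_cv_const|].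
      apply CV_minus; [apply Un_cv_const|auto].
    + intros k. apply Hdw, C_convex; auto. apply HWk.
Qed.

Lemma separation z : (exists w, C w) -> ~ closure m C z ->
  exists c mu, (forall w, C w -> mu <= rsum m (fun i => c i * w i)) /\
    rsum m (fun i => c i * z i) < mu.
Proof.
  intros Hne Hz.
  destruct (dist2_lower_bound_of_not_closure z Hz) as [e [He Hfar]].
  destruct (nearest_point z Hne) as [p [Hpfar Hproj]].
  pose proof (Hpfar e Hfar) as Hpe.
  assert (Hvar : forall v, C v -> rsum m (fun i => (z i - p i) * (v i - p i)) <= 0).
  { intros v Hv. apply (nonpos_of_quadratic_bound _ (dist2 m v p) (dist2_nonneg m v p)).
    intros t Ht. pose proof (Hproj v t Hv ltac:(lra)) as H.
    rewrite dist2_segment in H. lra. }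
  exists (fun i => p i - z i), (rsum m (fun i => (p i - z i) * p i)). split.
  - intros w Hw. specialize (Hvar w Hw).
    enough (rsum m (fun i => (z i - p i) * (w i - p i)) =
      rsum m (fun i => (p i - z i) * p i) - rsum m (fun i => (p i - z i) * w i)) by lra.
    rewrite <- rsum_minus. apply rsum_ext. intros; ring.
  - enough (rsum m (fun i => (p i - z i) * p i) - rsum m (fun i => (p i - z i) * z i) =
      dist2 m z p) by lra.
    rewrite <- rsum_minus. apply rsum_ext. intros; ring.
Qed.

End Separation.

Lemma conv_of_mem m (X : (nat -> R) -> Prop) w : X w -> conv m X w.
Proof.
  intros Hw. exists 1%nat, (fun _ => 1), (fun _ => w).
  split; [intros l _; split; [lra|exact Hw]|]. split; [simpl; ring|]. intros i _. simpl. ring.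
Qed.

Lemma conv_convex m (X : (nat -> R) -> Prop) w v t :
  conv m X w -> conv m X v -> 0 <= t <= 1 -> conv m X (fun i => w i + t * (v i - w i)).
Proof.
  intros [k1 [l1 [p1 [H1 [S1 E1]]]]] [k2 [l2 [p2 [H2 [S2 E2]]]]] Ht.
  exists (k1 + k2)%nat,
    (fun l => if Nat.ltb l k1 then (1 - t) * l1 l else t * l2 (l - k1)%nat),
    (fun l => if Nat.ltb l k1 then p1 l else p2 (l - k1)%nat).
  assert (Hlo : forall f g : nat -> R,
    rsum k1 (fun l => if Nat.ltb l k1 then f l else g l) = rsum k1 f).
  { intros f g. apply rsum_ext. intros l Hl. destruct (Nat.ltb_spec l k1); [auto|lia]. }
  assert (Hhi : forall f g : nat -> R,
    rsum k2 (fun l => if Nat.ltb (k1 + l) k1 then f (k1 + l)%nat else g (k1 + l - k1)%nat)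
    = rsum k2 g).
  { intros f g. apply rsum_ext. intros l Hl. destruct (Nat.ltb_spec (k1 + l) k1); [lia|].
    f_equal. lia. }
  split; [|split].
  - intros l Hl. destruct (Nat.ltb_spec l k1).
    + destruct (H1 l) as [Hl1 Hp1]; auto. split; [apply Rmult_le_pos; lra|auto].
    + destruct (H2 (l - k1)%nat) as [Hl2 Hp2]; [lia|]. split; [apply Rmult_le_pos; lra|auto].
  - rewrite rsum_split, Hlo, (Hhi (fun l => (1 - t) * l1 l) (fun l => t * l2 l)).
    rewrite !rsum_mult_l, S1, S2. ring.
  - intros i Hi. rewrite rsum_split.
    rewrite (rsum_ext k1 _ (fun l => (1 - t) * (l1 l * p1 l i))).
    2: { intros l Hl. destruct (Nat.ltb_spec l k1); [ring|lia]. }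
    rewrite (rsum_ext k2 _ (fun l => t * (l2 l * p2 l i))).
    2: { intros l Hl. destruct (Nat.ltb_spec (k1 + l) k1); [lia|].
         replace (k1 + l - k1)%nat with l by lia. ring. }
    rewrite !rsum_mult_l, <- E1, <- E2 by auto. ring.
Qed.

Lemma nonneg_dot_conv m (X : (nat -> R) -> Prop) b :
  (forall w, X w -> 0 <= rsum m (fun i => b i * w i)) ->
  forall w, conv m X w -> 0 <= rsum m (fun i => b i * w i).
Proof.
  intros HX w [k [l [p [Hp [_ Hw]]]]].
  rewrite (rsum_ext m _ (fun i => rsum k (fun j => l j * (b i * p j i)))).
  - rewrite rsum_comm. apply rsum_nonneg. intros j Hj. rewrite rsum_mult_l.
    destruct (Hp j Hj). apply Rmult_le_pos; auto.
  - intros i Hi. rewrite Hw, <- rsum_mult_l by auto. apply rsum_ext. intros; ring.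
Qed.

Lemma nonneg_dot_closure m (X : (nat -> R) -> Prop) b :
  (forall w, X w -> 0 <= rsum m (fun i => b i * w i)) ->
  forall w, closure m X w -> 0 <= rsum m (fun i => b i * w i).
Proof.
  intros HX w Hw. apply Rnot_lt_le. intros Hneg.
  set (G := rsum m (fun i => b i * w i)) in Hneg.
  set (M := rsum m (fun i => Rabs (b i)) + 1).
  assert (HM : 1 <= M).
  { pose proof (rsum_nonneg m (fun i => Rabs (b i)) (fun i _ => Rabs_pos (b i))). unfold M. lra. }
  (* a point within - G / M of w makes the linear form negative *)
  destruct (Hw (- G / M)) as [w' [Hw' Hclose]]; [apply Rdiv_lt_0_compat; lra|].
  pose proof (HX w' Hw').
  assert (rsum m (fun i => b i * w' i) - G <= rsum m (fun i => Rabs (b i)) * (- G / M)).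
  { unfold G at 1. rewrite <- rsum_minus, <- rsum_mult_r. apply rsum_le. intros i Hi.
    specialize (Hclose i Hi). rewrite <- Rmult_minus_distr_l.
    eapply Rle_trans; [apply Rle_abs|]. rewrite Rabs_mult.
    apply Rmult_le_compat_l; [apply Rabs_pos|]. rewrite Rabs_minus_sym. lra. }
  assert (rsum m (fun i => Rabs (b i)) * (- G / M) < M * (- G / M)).
  { apply Rmult_lt_compat_r; [apply Rdiv_lt_0_compat|unfold M]; lra. }
  assert (M * (- G / M) = - G) by (field; lra).
  lra.
Qed.

Lemma NNS_dot_moment n m A c x y : C_NNS n m A c -> T_moment n m A y ->
  0 <= rsum m (fun i => c i * exp (dotcol n A i x + y i)).
Proof.
  intros Hc Hy.
  rewrite (rsum_ext m _ (fun i => c i * exp (dotcol n A i x) * exp (y i)))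
    by (intros; rewrite exp_plus; ring).
  apply (nonneg_dot_closure m (conv m (exp_range n m A))); [|exact Hy].
  apply nonneg_dot_conv. intros w Hw. now apply NNS_dot_exp_range.
Qed.

Section Main.
Variables (n m : nat) (A : nat -> nat -> R) (S : (nat -> R) -> Prop).
Hypothesis Hm : (0 < m)%nat.
Hypothesis Ha1 : forall j, (j < n)%nat -> A 0%nat j = 0.
Hypothesis HS : SAGE_feasible_slacks n m A S.

Lemma slack_value_of_slack c s : S s ->
  slack_values n m A S c (rsum m (fun i => c i * exp (s i))).
Proof.
  intros Hs. exists s. split; [|reflexivity].
  exists (fun _ => 0), s. split; [exact Hs|]. intros i _. rewrite dotcol_zero. ring.
Qed.

Lemma moment_of_SAGE_eq_NNS : (forall c, C_SAGE n m A c <-> C_NNS n m A c) ->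
  forall s, S s -> T_moment n m A s.
Proof.
  intros Hiff s Hs. apply NNPP. intros Hout.
  destruct (separation m (conv m (exp_range n m A)) (conv_convex m _) (fun i => exp (s i)))
    as [c [mu [Hsep Hlt]]]; [exists (fun _ => 1); apply conv_of_mem, exp_range_one|exact Hout|].
  assert (Hmu : SAGE_set n m A c mu).
  { apply Hiff. intros x. rewrite Sig_shift_e1 by auto.
    enough (mu <= Sig n m A c x) by lra.
    apply (Hsep (fun i => exp (dotcol n A i x))), conv_of_mem. now exists x. }
  destruct (HS c) as [u [[Hsup _] [Hinf _]]].
  pose proof (Hsup mu Hmu). pose proof (Hinf _ (slack_value_of_slack c s Hs)).
  destruct u; simpl in *; lra.
Qed.

Lemma SAGE_eq_NNS_of_moment : (forall s, S s -> T_moment n m A s) ->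
  forall c, C_SAGE n m A c <-> C_NNS n m A c.
Proof.
  intros HT c. split; [apply C_SAGE_NNS|]. intros Hc.
  destruct (HS c) as [u [[_ Hsup] [_ Hinf]]].
  assert (Hu : ERle (Fin 0) u).
  { apply Hinf. intros t [y [[x [s [Hs Hy]]] ->]]. simpl.
    rewrite (rsum_ext m _ (fun i => c i * exp (dotcol n A i x + s i)))
      by (intros i Hi; now rewrite Hy).
    now apply NNS_dot_moment, HT. }
  apply C_SAGE_of_shifts. intros e He. apply NNPP. intros Hno.
  assert (ERle u (Fin (- e))).
  { apply Hsup. intros g Hg. simpl. apply Rnot_lt_le. intros Hlt.
    apply Hno, (SAGE_set_down n m A c g); auto; lra. }
  destruct u; simpl in *; lra.
Qed.

End Main.

Theorem mainTheorem20 (n m : nat) (A : nat -> nat -> R) (S : (nat -> R) -> Prop)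
  (Hm : (0 < m)%nat)
  (Hdist : distinct_columns n m A)
  (Ha1 : forall j, (j < n)%nat -> A 0%nat j = 0)
  (HS : SAGE_feasible_slacks n m A S) :
  (forall c : nat -> R, C_SAGE n m A c <-> C_NNS n m A c) <->
  (forall s, S s -> T_moment n m A s).
Proof.
  split.
  - exact (moment_of_SAGE_eq_NNS n m A S Hm Ha1 HS).
  - exact (SAGE_eq_NNS_of_moment n m A S Hm HS).
Qed.
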